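(* Let $n\ge 2$ and let $Q_n$ be the $n$-dimensional discrete binary cube. (a) $crx_1(Q_n)=4$. (b) $crx_2(Q_n)=crx_3(Q_n)=2n$. (c) $crx_k(Q_n)=2^n$ for $2^{n-1}\le k\le 2^n$.
   Context: $Q_n$ has vertex set $\{0,1\}^n$, two vectors adjacent iff they differ in exactly one coordinate. An edge-coloured cycle is rainbow if its edges have distinct colours. For a graph $G$ in which any $k$ vertices lie on a common cycle, $crx_k(G)$ is the minimum number of colours in an edge-colouring of $G$ such that every set of $k$ vertices of $G$ lies in some rainbow cycle. *)

From mathcomp Require Import all_boot.
Set Implicit Arguments. Unset Strict Implicit. Unset Printing Implicit Defensive.

Definition cube (n : nat) := {ffun 'I_n -> bool}.

Definition qadj (n : nat) : rel (cube n) :=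
  fun u v => #|[set i | u i != v i]| == 1.

Definition is_cycle (n : nat) (s : seq (cube n)) : bool :=
  [&& 2 < size s, uniq s & cycle (@qadj n) s].

(* An edge colouring with (at most) m colours: edges {u,v} are represented
   as the sets [set u; v]; values on non-edges are irrelevant. *)
Definition colouring (n m : nat) := {set cube n} -> 'I_m.

Definition rainbow (n m : nat) (c : colouring n m) (s : seq (cube n)) : bool :=
  uniq [seq c [set x; next s x] | x <- s].

Definition k_rainbow_connected (n k m : nat) (c : colouring n m) : Prop :=
  forall S : {set cube n}, #|S| = k ->
    exists s : seq (cube n), [/\ @is_cycle n s, {subset S <= s} & rainbow c s].

Definition is_crx (n k m : nat) : Prop :=
  (exists c : colouring n m, @k_rainbow_connected n k m c) /\
  (forall (m' : nat) (c' : colouring n m'), @k_rainbow_connected n k m' c' -> m <= m').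

From mathcomp Require Import all_boot zify.
Set Implicit Arguments. Unset Strict Implicit. Unset Printing Implicit Defensive.

(* Lower bounds: adjacent vertices of Q_n have weights of opposite parity, so
   every cycle is balanced between odd and even vertices (hence has length at
   least 4, and at least 2^n if it passes through all odd vertices), and a
   cycle through x and its antipode has length at least 2n.  A rainbow cycle
   has at most as many edges as there are colours.

   Upper bounds: for 2^n colours, colour a Hamiltonian cycle (a reflected Gray
   code) injectively.  For 2n colours (4 when k = 1), colour an edge of
   direction i by 2i or 2i + 1, the last bit being a parity of coordinates of
   index below i.  By induction on m, any three vertices of an m-subcube lie on
   a cycle of that subcube whose colours are distinct and smaller than 2m: two
   of them lie in the same half of the subcube; by induction they lie on such a
   cycle together with the mirror image z of the third vertex, and if needed
   the cycle is rerouted from an edge zt to the path z z' t' t through the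
   other half.  The new edges z z' and t' t have direction m and colours 2m and
   2m + 1, because z and t differ below m, while z' t' keeps the colour of zt. *)

Lemma map_next_zip (T : eqType) (s : seq T) :
  uniq s -> [seq (w, next s w) | w <- s] = zip s (rot 1 s).
Proof.
case: s => [|a l] // Ul; rewrite rot1_cons.
have size_eq : size (a :: l) = size (rcons l a) by rewrite size_rcons.
apply: (@eq_from_nth _ (a, a)); first by rewrite size_map size_zip -size_eq minnn.
rewrite size_map => i i_lt.
rewrite (nth_map a) // nth_zip // next_nth mem_nth // index_uniq // nth_rcons.
by case: ltnP => // l_le; rewrite if_same [nth a l i]nth_default.
Qed.

Lemma next_next_neq (T : eqType) (s : seq T) x :
  uniq s -> 2 < size s -> x \in s -> next s (next s x) != x.
Proof.
move=> Us s_gt2 sx; case: (rot_to sx) => k r Er.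
have Ur : uniq (x :: r) by rewrite -Er rot_uniq.
rewrite -!(next_rot k Us) Er.
have : 2 < size (x :: r) by rewrite -Er size_rot.
case: r {Er} Ur => [|a [|b r]] //= /andP [].
rewrite !inE !negb_or => /and3P [xa xb _] _ _.
have ax : (a == x) = false by rewrite eq_sym (negbTE xa).
by rewrite /next /= eqxx ax eqxx eq_sym.
Qed.

Lemma cycle_cat_rev_map (T : Type) (e : rel T) (f : T -> T) a p :
  symmetric e -> (forall u v, e (f u) (f v) = e u v) -> (forall u, e u (f u)) ->
  path e a p -> cycle e (a :: p ++ rev (map f (a :: p))).
Proof.
move=> e_sym e_f e_uf ep.
have Er : rev (a :: p) = last a p :: rev (belast a p) by rewrite lastI rev_rcons.
have El : last (last a p) (rev (belast a p)) = a.
  by have := congr1 (last a) Er; rewrite /= rev_cons last_rcons.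
have path_f b q : path e (f b) (map f q) = path e b q.
  by elim: q b => //= c q IHq b; rewrite e_f IHq.
rewrite /cycle rcons_path cat_path ep -map_rev Er /= e_uf path_f.
rewrite last_cat /= last_map El (e_sym (f a)) e_uf andbT.
by rewrite rev_path (@eq_path _ _ e).
Qed.

Lemma exists_superset_card (T : finType) (A : {set T}) k :
  #|A| <= k <= #|T| -> exists2 S : {set T}, A \subset S & #|S| = k.
Proof.
case/andP=> Ak kT.
have : k - #|A| <= #|~: A| by have := cardsC A; lia.
case/card_geqP=> t [Ut St tA]; exists (A :|: [set u in t]); first exact: subsetUl.
rewrite cardsU (_ : A :&: _ = set0) ?cards0.
  by rewrite cardsE (card_uniqP Ut) St; lia.
by apply/setP=> u; rewrite !inE; apply/andP=> [[uA /tA]]; rewrite inE uA.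
Qed.

Lemma set_of_three (T : finType) (S : {set T}) :
  0 < #|S| <= 3 -> exists x y z, S =i [:: x; y; z].
Proof.
have : S =i enum S by move=> u; rewrite mem_enum.
rewrite cardE; case: (enum S) => [|x [|y [|z [|]]]] //= ES _.
- by exists x, x, x => u; rewrite ES !inE !orbb.
- by exists x, y, y => u; rewrite ES !inE orbb.
- by exists x, y, z.
Qed.

Section Cube.

Variable n : nat.
Implicit Types (u v w x y z : cube n) (i j : 'I_n) (s : seq (cube n)).

Definition flip u i : cube n := [ffun j => (j == i) (+) u j].

Lemma flipE u i j : flip u i j = (j == i) (+) u j.
Proof. by rewrite ffunE. Qed.

Lemma flipK i : involutive (flip^~ i).
Proof. by move=> u; apply/ffunP=> j; rewrite !flipE addKb. Qed.

Lemma flipC u i j : flip (flip u i) j = flip (flip u j) i.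
Proof. by apply/ffunP=> k; rewrite !flipE addbCA. Qed.

Lemma flip_neq u i : flip u i != u.
Proof. by apply/eqP=> /ffunP /(_ i); rewrite flipE eqxx; case: (u i). Qed.

Lemma flip_inj_dir u i j : flip u i = flip u j -> i = j.
Proof.
by move/ffunP/(_ i); rewrite !flipE eqxx; case: eqVneq => // _; case: (u i).
Qed.

Lemma qadjP u v : reflect (exists i, v = flip u i) (qadj u v).
Proof.
apply: (iffP cards1P) => [[i /setP uv] | [i ->]]; exists i.
  apply/ffunP=> j; have := uv j; rewrite !inE flipE => <-.
  by case: (u j); case: (v j).
by apply/setP=> j; rewrite !inE flipE; case: (j == i); case: (u j).
Qed.

Lemma qadj_flip u i : qadj u (flip u i).
Proof. by apply/qadjP; exists i. Qed.

Lemma qadj_sym : symmetric (@qadj n).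
Proof.
by move=> u v; apply/qadjP/qadjP=> -[i ->]; exists i; rewrite flipK.
Qed.

Lemma qadj_flip2 i u v : qadj (flip u i) (flip v i) = qadj u v.
Proof.
apply/qadjP/qadjP=> -[j E]; exists j; last by rewrite E flipC.
by rewrite -(flipK i v) E flipC flipK.
Qed.

Lemma odd_card_flip (W : {set 'I_n}) u i :
  odd #|W :&: [set j | flip u i j]| = (i \in W) (+) odd #|W :&: [set j | u j]|.
Proof.
set A := W :&: [set j | u j].
case Wi: (i \in W); last first.
  congr odd; apply: eq_card => j; rewrite !inE flipE.
  by case: eqP => [-> | _]; rewrite ?Wi.
case ui: (u i).
  have -> : W :&: [set j | flip u i j] = A :\ i.
    by apply/setP=> j; rewrite !inE flipE; case: eqP => [-> | _]; rewrite ?Wi ?ui.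
  by rewrite (cardsD1 i A) !inE Wi ui addTb /= negbK.
have -> : W :&: [set j | flip u i j] = i |: A.
  by apply/setP=> j; rewrite !inE flipE; case: eqP => [-> | _]; rewrite ?Wi ?ui.
by rewrite cardsU1 !inE Wi ui.
Qed.

Definition parity u := odd #|[set j | u j]|.

Lemma qadj_parity u v : qadj u v -> parity v = ~~ parity u.
Proof.
case/qadjP=> i ->; rewrite /parity -(setTI [set j | flip u i j]).
by rewrite -(setTI [set j | u j]) odd_card_flip inE.
Qed.

(* An edge {u, flip u i} gets colour 2i + b, where b is the parity of u on
   [window i]: on u_1 when i = 0, and on u_0, ..., u_(i-1) when i > 0.  The
   window never contains i, so both ends of the edge give the same colour. *)
Definition window i : {set 'I_n} :=
  [set j : 'I_n | if i == 0 :> nat then j == 1 :> nat else j < i].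

Definition dir_colour u i := 2 * i + odd #|window i :&: [set j | u j]|.

Lemma dir_colour_ge u i : 2 * i <= dir_colour u i.
Proof. exact: leq_addr. Qed.

Lemma dir_colour_lt u i : dir_colour u i < 2 * i.+1.
Proof. by rewrite /dir_colour; case: odd; lia. Qed.

Lemma dir_colour_flip_out u i j :
  j \notin window i -> dir_colour (flip u j) i = dir_colour u i.
Proof. by move/negbTE=> ji; rewrite /dir_colour odd_card_flip ji. Qed.

Lemma dir_colour_flip_in u i j :
  j \in window i -> dir_colour (flip u j) i != dir_colour u i.
Proof. by move=> ji; rewrite /dir_colour odd_card_flip ji eqn_add2l; case: odd. Qed.

Lemma window_irr i : i \notin window i.
Proof. by rewrite inE; case: eqP => [-> // | _]; rewrite ltnn. Qed.

Lemma mem_window i j : 0 < i -> j < i -> j \in window i.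
Proof. by rewrite inE; case: eqP => // ->. Qed.

Lemma notin_window i j : 1 < i -> j < i -> i \notin window j.
Proof. by rewrite inE; case: eqP => [-> | _] ? ?; lia. Qed.

Definition edge_colour (S : {set cube n}) : nat :=
  if [pick p : cube n * 'I_n | (p.1 \in S) && (flip p.1 p.2 \in S)] is Some (u, i)
  then dir_colour u i else 0.

Lemma edge_colour_flip u i : edge_colour [set u; flip u i] = dir_colour u i.
Proof.
rewrite /edge_colour; case: pickP => [[w j] /= /andP [] | /(_ (u, i))]; last first.
  by rewrite /= set21 set22.
case/set2P=> ->; case/set2P.
- by move/eqP; rewrite (negbTE (flip_neq _ _)).
- by move/flip_inj_dir->.
- by rewrite -{2}(flipK i u) => /flip_inj_dir->; rewrite dir_colour_flip_out ?window_irr.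
- by move/eqP; rewrite (negbTE (flip_neq _ _)).
Qed.

Lemma is_cycle_uniq s : is_cycle s -> uniq s.
Proof. by case/and3P. Qed.

Definition colour_seq s := [seq edge_colour [set w; next s w] | w <- s].

Lemma colour_seq_zip s :
  uniq s -> colour_seq s = [seq edge_colour [set p.1; p.2] | p <- zip s (rot 1 s)].
Proof. by move=> Us; rewrite -map_next_zip // -map_comp. Qed.

Lemma colour_seq_rot k s : uniq s -> colour_seq (rot k s) = rot k (colour_seq s).
Proof. by move=> Us; rewrite /colour_seq -map_rot; apply: eq_map => w; rewrite next_rot. Qed.

(** * Rainbow cycles through three vertices *)

Definition subcube (m : nat) : rel (cube n) :=
  fun x y => [forall j : 'I_n, (m <= j) ==> (x j == y j)].

Lemma subcubeP m x y : reflect (forall j : 'I_n, m <= j -> x j = y j) (subcube m x y).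
Proof.
apply: (iffP forallP) => [xy j mj | xy j]; first exact/eqP/(implyP (xy j)).
by apply/implyP=> /xy->.
Qed.

Lemma subcube_refl m : reflexive (subcube m).
Proof. by move=> x; apply/subcubeP. Qed.

Lemma subcube_sym m : symmetric (subcube m).
Proof. by move=> x y; apply/subcubeP/subcubeP=> xy j /xy. Qed.

Lemma subcube_trans m : transitive (subcube m).
Proof. by move=> y x z /subcubeP xy /subcubeP yz; apply/subcubeP=> j mj; rewrite xy ?yz. Qed.

Lemma subcubeS m x y : subcube m x y -> subcube m.+1 x y.
Proof. by move/subcubeP=> xy; apply/subcubeP=> j /ltnW /xy. Qed.

Lemma subcube_top x y : subcube n x y.
Proof. by apply/subcubeP=> j; rewrite leqNgt ltn_ord. Qed.

Lemma subcube0 x y : subcube 0 x y -> y = x.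
Proof. by move/subcubeP=> xy; apply/ffunP=> j; rewrite xy. Qed.

Lemma subcube_flip m i x y : i < m -> subcube m x (flip y i) = subcube m x y.
Proof.
move=> im; apply/subcubeP/subcubeP=> xy j mj; have := xy j mj; rewrite flipE;
  by case: eqP => [ji | _]; [move: mj; rewrite ji leqNgt im | rewrite addFb].
Qed.

Lemma subcube_flip_out i x y : subcube i x y -> ~~ subcube i x (flip y i).
Proof.
by move/subcubeP=> /(_ i (leqnn i)) xy; apply/subcubeP=> /(_ i (leqnn i));
  rewrite flipE eqxx xy; case: (y i).
Qed.

Lemma subcube_succ i x y : subcube i.+1 x y -> subcube i x y = (x i == y i).
Proof.
move/subcubeP=> xy; apply/subcubeP/eqP=> [-> // | xyi j].
by rewrite leq_eqVlt => /predU1P [/val_inj <- // | /xy].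
Qed.

Lemma subcube_succE i x y :
  subcube i.+1 x y = subcube i x y || subcube i x (flip y i).
Proof.
apply/idP/orP=> [xy | [] /subcubeS //]; last by rewrite subcube_flip.
rewrite (subcube_succ xy) subcube_succ; last by rewrite subcube_flip.
by rewrite flipE eqxx; case: (x i); case: (y i); [left | right | right | left].
Qed.

Definition rainbow_subcycle m x s :=
  [&& is_cycle s, all (subcube m x) s, uniq (colour_seq s)
    & all (fun c => c < 2 * m) (colour_seq s)].

Lemma rainbow_subcycle_rot m x s k :
  rainbow_subcycle m x s -> rainbow_subcycle m x (rot k s).
Proof.
case/and4P=> /and3P [s_gt2 Us cs] sx Uc cm.
rewrite /rainbow_subcycle /is_cycle colour_seq_rot // size_rot !rot_uniq rot_cycle.
by rewrite !(eq_all_r (mem_rot k _)) s_gt2 Us cs sx Uc cm.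
Qed.

Lemma rainbow_subcycleS m x s : rainbow_subcycle m x s -> rainbow_subcycle m.+1 x s.
Proof.
case/and4P=> cyc sx Uc cm; rewrite /rainbow_subcycle cyc Uc.
rewrite (sub_all (@subcubeS m x) sx); apply: sub_all cm => c /=; lia.
Qed.

Lemma rainbow_subcycle_rebase m x y s :
  subcube m x y -> rainbow_subcycle m y s -> rainbow_subcycle m x s.
Proof.
move=> xy /and4P [cyc sy Uc cm]; rewrite /rainbow_subcycle cyc Uc cm /=.
by rewrite andbT; apply: sub_all sy => z; apply: subcube_trans.
Qed.

Lemma square_rainbow_subcycle (n_gt1 : 1 < n) x :
  exists2 s, rainbow_subcycle 2 x s & forall y, subcube 2 x y -> y \in s.
Proof.
pose i0 : 'I_n := Ordinal (ltnW n_gt1); pose i1 : 'I_n := Ordinal n_gt1.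
pose s := [:: x; flip x i0; flip (flip x i0) i1; flip x i1].
have Us : uniq s.
  rewrite (map_uniq (f := fun w : cube n => (w i0, w i1))) //= !flipE /=.
  by case: (x i0); case: (x i1).
have cyc : is_cycle s.
  rewrite /is_cycle Us /= !qadj_flip flipC (qadj_sym (flip _ i0)) !qadj_flip.
  by rewrite qadj_sym qadj_flip.
exists s => [| y]; last first.
  have cover w : subcube 1 x w -> w = x \/ w = flip x i0.
    by rewrite (subcube_succE i0) => /orP [] /subcube0 <-; [left | right; rewrite flipK].
  rewrite (subcube_succE i1) => /orP [] /cover [] E; rewrite !inE;
    by rewrite ?E ?eqxx ?orbT // -[y](flipK i1) E eqxx ?orbT.
(* The colours are x_1, 2 + ~~ x_0, ~~ x_1 and 2 + x_0 in this order. *)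
rewrite /rainbow_subcycle cyc colour_seq_zip //= !edge_colour_flip.
rewrite !subcube_flip // subcube_refl flipC (setUC [set flip (flip x i1) i0]).
rewrite (setUC [set flip x i1] [set x]) !edge_colour_flip /= !inE.
have := dir_colour_flip_in x (_ : i1 \in window i0); rewrite inE => /(_ isT).
have := dir_colour_flip_in x (_ : i0 \in window i1); rewrite inE => /(_ isT).
have := dir_colour_lt x i0; have := dir_colour_lt (flip x i1) i0.
have := dir_colour_ge x i1; have := dir_colour_lt x i1.
have := dir_colour_ge (flip x i0) i1; have := dir_colour_lt (flip x i0) i1.
rewrite /=; lia.
Qed.

Lemma is_cycle_splice i x z j r :
  is_cycle [:: z, flip z j & r] -> all (subcube i x) [:: z, flip z j & r] ->
  is_cycle [:: z, flip z i, flip (flip z j) i, flip z j & r].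
Proof.
set s := [:: z, flip z j & r] => /and3P [_ Us cyc] sx.
have out w : w \in s -> flip w i \notin s.
  move=> /(allP sx) xw; apply/negP=> /(allP sx); exact/negP/subcube_flip_out.
have P : perm_eq [:: z, flip z i, flip (flip z j) i, flip z j & r]
                 [:: flip z i, flip (flip z j) i & s].
  by rewrite (perm_catCA [:: z] [:: flip z i; flip (flip z j) i]) perm_refl.
have Us' : uniq [:: flip z i, flip (flip z j) i & s].
  rewrite cons_uniq in_cons negb_or cons_uniq Us (can_eq (flipK i)) eq_sym flip_neq.
  by rewrite !out // !inE eqxx ?orbT.
rewrite /is_cycle (perm_uniq P) Us' /=.
by move: cyc; rewrite /cycle /= qadj_flip2 (qadj_sym (flip (flip z j) i)) !qadj_flip.
Qed.

Lemma colour_seq_splice i j z r : 1 < i -> j < i ->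
  uniq [:: z, flip z i, flip (flip z j) i, flip z j & r] -> uniq [:: z, flip z j & r] ->
  exists tl, colour_seq [:: z, flip z j & r] = dir_colour z j :: tl /\
    colour_seq [:: z, flip z i, flip (flip z j) i, flip z j & r]
    = [:: dir_colour z i, dir_colour z j, dir_colour (flip z j) i & tl].
Proof.
move=> i_gt1 ji U' U; rewrite !colour_seq_zip //= !edge_colour_flip.
rewrite (setUC [set flip (flip z j) i]) edge_colour_flip flipC edge_colour_flip.
by rewrite dir_colour_flip_out ?notin_window //; eexists.
Qed.

Lemma rainbow_subcycle_splice i x z j r : 1 < i ->
  rainbow_subcycle i x [:: z, flip z j & r] ->
  rainbow_subcycle i.+1 x [:: z, flip z i, flip (flip z j) i, flip z j & r].
Proof.
move=> i_gt1 /and4P [cyc sx Uc ci].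
have ji : j < i.
  move: sx => /and3P [xz xt _]; rewrite ltnNge; apply/negP => ij.
  rewrite subcube_sym in xz; have /subcubeP/(_ j ij) := subcube_trans xz xt.
  by rewrite flipE eqxx; case: (z j).
have cyc' := is_cycle_splice cyc sx.
have [tl [Eold Enew]] := colour_seq_splice i_gt1 ji (is_cycle_uniq cyc') (is_cycle_uniq cyc).
have /= /and3P [xz xt xr] := sub_all (@subcubeS i x) sx.
move: Uc ci; rewrite Eold /= => /andP [dz_tl Utl] /andP [dz_lt tl_lt].
have tl_small c : 2 * i <= c -> c \notin tl.
  by move=> ic; apply/negP=> /(allP tl_lt) /=; lia.
have tl_lt' : all (fun c => c < 2 * i.+1) tl by apply: sub_all tl_lt => c /=; lia.
have ji' : j < i.+1 by rewrite ltnS ltnW.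
rewrite /rainbow_subcycle cyc' Enew /= !subcube_flip ?ltnSn //.
rewrite !in_cons !negb_or xz xr Utl dz_tl tl_lt' !tl_small ?dir_colour_ge //= !andbT.
have := dir_colour_flip_in z (mem_window (ltnW i_gt1) ji).
have := dir_colour_ge z i; have := dir_colour_lt z i.
have := dir_colour_ge (flip z j) i; have := dir_colour_lt (flip z j) i.
lia.
Qed.

Lemma rainbow_subcycle_extend i x s z : 1 < i ->
  rainbow_subcycle i x s -> z \in s ->
  exists s', [/\ rainbow_subcycle i.+1 x s', {subset s <= s'} & flip z i \in s'].
Proof.
move=> i_gt1 rs zs; case: (rot_to zs) => k r Er.
have := rainbow_subcycle_rot k rs; rewrite Er.
case: r Er => [|t r] Er rs'; first by case/and4P: rs' => /and3P [].
case/and4P: (rs') => /and3P [_ _ /andP [/qadjP [j Et] _]] _ _ _; subst t.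
exists [:: z, flip z i, flip (flip z j) i, flip z j & r]; split.
- exact: rainbow_subcycle_splice.
- by move=> w; rewrite -(mem_rot k) Er !inE => /or3P [] ->; rewrite ?orbT.
- by rewrite !inE eqxx orbT.
Qed.

Definition triples_on_rainbow_subcycles m :=
  forall x y z, subcube m x y -> subcube m x z ->
  exists2 s, rainbow_subcycle m x s & [/\ x \in s, y \in s & z \in s].

Lemma triples_on_rainbow_subcycles2 :
  1 < n -> triples_on_rainbow_subcycles 2.
Proof.
move=> n_gt1 x y z xy xz; have [s rs sx] := square_rainbow_subcycle n_gt1 x.
by exists s; rewrite ?sx ?subcube_refl.
Qed.

Lemma triples_on_rainbow_subcyclesS i : 1 < i ->
  triples_on_rainbow_subcycles i -> triples_on_rainbow_subcycles i.+1.
Proof.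
move=> i_gt1 IH.
have half a b c : subcube i a b -> subcube i.+1 a c ->
    exists2 s, rainbow_subcycle i.+1 a s & [/\ a \in s, b \in s & c \in s].
  move=> ab; rewrite subcube_succE => /orP [ac | ac].
    by have [s rs abc] := IH a b c ab ac; exists s; first exact: rainbow_subcycleS.
  have [s rs [as_ bs cs]] := IH a b _ ab ac.
  have [s' [rs' ss' cs']] := rainbow_subcycle_extend i_gt1 rs cs.
  by exists s' => //; split; [apply: ss' | apply: ss' | rewrite -[c](flipK i)].
move=> x y z xy xz.
case Ey: (x i == y i); first by apply: half; rewrite ?subcube_succ ?Ey.
case Ez: (x i == z i).
  have xz' : subcube i x z by rewrite subcube_succ.
  by have [s rs [? ? ?]] := half x z y xz' xy; exists s.
have yz : subcube i y z.
  rewrite subcube_succ; last by apply: subcube_trans xz; rewrite subcube_sym.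
  by move: Ey Ez; case: (x i); case: (y i); case: (z i).
have yx : subcube i.+1 y x by rewrite subcube_sym.
have [s rs [? ? ?]] := half y z x yz yx.
by exists s; first exact: rainbow_subcycle_rebase rs.
Qed.

Lemma triples_on_rainbow_subcycles_le m :
  2 <= m <= n -> triples_on_rainbow_subcycles m.
Proof.
elim: m => // m IH /andP [m_ge1 m_lt].
have [m1 | m_gt1] := eqVneq m 1; first by rewrite m1; apply: triples_on_rainbow_subcycles2; lia.
have IHm : triples_on_rainbow_subcycles (Ordinal m_lt) by apply: IH; lia.
by apply: triples_on_rainbow_subcyclesS IHm; rewrite /=; lia.
Qed.

Definition nat_colouring m (m_gt0 : 0 < m) (g : {set cube n} -> nat) : colouring n m :=
  fun S => Ordinal (ltn_pmod (g S) m_gt0).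

Lemma rainbow_nat_colouring m (m_gt0 : 0 < m) g s :
  uniq [seq g [set w; next s w] | w <- s] ->
  all (fun c => c < m) [seq g [set w; next s w] | w <- s] ->
  rainbow (nat_colouring m_gt0 g) s.
Proof.
move=> Ug gm; rewrite /rainbow -(map_inj_uniq val_inj) -map_comp.
congr (uniq _): Ug; apply/eq_in_map=> w ws /=.
by rewrite modn_small // (allP gm) // map_f.
Qed.

Lemma rainbow_size m (c : colouring n m) s : rainbow c s -> size s <= m.
Proof.
move=> Uc; rewrite -(size_map (fun w => c [set w; next s w])) -(card_uniqP Uc).
by rewrite -[m in _ <= m]card_ord max_card.
Qed.

Lemma small_sets_rainbow_connected m (m_gt0 : 0 < 2 * m) k :
  2 <= m <= n -> 0 < k <= 3 ->
  (forall S : {set cube n}, #|S| = k -> exists x, forall y, y \in S -> subcube m x y) ->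
  k_rainbow_connected k (nat_colouring m_gt0 edge_colour).
Proof.
move=> m_range k_range sub S Sk; have [x Sx] := sub S Sk.
have [a [b [c Sabc]]] : exists a b c, S =i [:: a; b; c] by apply: set_of_three; rewrite Sk.
have xS u : u \in [:: a; b; c] -> subcube m x u by rewrite -Sabc; apply: Sx.
have ax : subcube m a x by rewrite subcube_sym xS ?inE ?eqxx.
have ab : subcube m a b by apply: subcube_trans ax (xS b _); rewrite !inE eqxx orbT.
have ac : subcube m a c by apply: subcube_trans ax (xS c _); rewrite !inE eqxx !orbT.
have [s rs [as_ bs cs]] := triples_on_rainbow_subcycles_le m_range ab ac.
exists s; split; first by case/and4P: rs.
  by move=> u; rewrite Sabc !inE => /or3P [] /eqP ->.
by case/and4P: rs => _ _; apply: rainbow_nat_colouring.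
Qed.

(** * Hamiltonian cycles *)

Lemma reflected_gray_cycle i x p :
  path (@qadj n) x p -> uniq (x :: p) -> (forall y, (y \in x :: p) = subcube i x y) ->
  let q := p ++ rev (map (flip^~ i) (x :: p)) in
  [/\ cycle (@qadj n) (x :: q), uniq (x :: q)
    & forall y, (y \in x :: q) = subcube i.+1 x y].
Proof.
move=> xp Up sub q; have flip_inj := can_inj (flipK i).
split.
- by apply: cycle_cat_rev_map xp => [|u v|u]; rewrite ?qadj_flip2 ?qadj_flip //; apply: qadj_sym.
- rewrite -cat_cons cat_uniq Up rev_uniq (map_inj_uniq flip_inj) Up andbT.
  apply/hasPn=> w; rewrite mem_rev -[w](flipK i) (mem_map flip_inj) !sub.
  exact: subcube_flip_out.
- move=> y; rewrite -cat_cons mem_cat mem_rev -[y in y \in map _ _](flipK i).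
  by rewrite (mem_map flip_inj) !sub subcube_succE.
Qed.

Lemma gray_path m x : m <= n ->
  exists p, [/\ path (@qadj n) x p, uniq (x :: p) & forall y, (y \in x :: p) = subcube m x y].
Proof.
elim: m => [|m IH] m_le.
  exists [::]; split=> // y; rewrite inE.
  by apply/eqP/idP=> [-> | /subcube0 //]; apply: subcube_refl.
have [p [xp Up sub]] := IH (ltnW m_le).
have [cyc Uq subq] := @reflected_gray_cycle (Ordinal m_le) x p xp Up sub.
exists (p ++ rev (map (flip^~ (Ordinal m_le)) (x :: p))); split => //.
by move: cyc; rewrite /cycle rcons_path => /andP [].
Qed.

Lemma card_cube : #|cube n| = 2 ^ n.
Proof. by rewrite card_ffun card_bool card_ord. Qed.

Lemma hamiltonian_cycle : 1 < n -> exists h, is_cycle h /\ forall y, y \in h.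
Proof.
move=> n_gt1; have n1_lt : n.-1 < n by lia.
pose x : cube n := [ffun=> false].
have [p [xp Up sub]] := gray_path x (ltnW n1_lt).
have [cyc Uh subh] := @reflected_gray_cycle (Ordinal n1_lt) x p xp Up sub.
set h := x :: _ in cyc Uh subh.
have all_h y : y \in h by rewrite subh /= prednK ?subcube_top //; lia.
exists h; split => //.
rewrite /is_cycle Uh cyc -(card_uniqP Uh).
rewrite (eq_card (B := cube n) all_h) card_cube.
have n4 : 2 ^ 2 <= 2 ^ n by rewrite leq_exp2l.
by rewrite andbT (leq_trans _ n4).
Qed.

Lemma hamiltonian_rainbow_colouring :
  1 < n -> exists c : colouring n (2 ^ n), forall k, k_rainbow_connected k c.
Proof.
move=> n_gt1; have [h [hc all_h]] := hamiltonian_cycle n_gt1.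
have [h_gt2 Uh _] := and3P hc.
have size_h : size h = 2 ^ n.
  by rewrite -(card_uniqP Uh) -card_cube; apply: eq_card.
have next_inj := can_inj (prev_next Uh).
pose g (S : {set cube n}) := if [pick u | (u \in S) && (next h u \in S)] is Some u then index u h else 0.
have gE x : g [set x; next h x] = index x h.
  have nnx := next_next_neq Uh h_gt2 (all_h x).
  rewrite /g; case: pickP => [u /andP [] | /(_ x)]; last by rewrite set21 set22.
  case/set2P=> -> //; case/set2P=> E; first by rewrite E eqxx in nnx.
  by move: nnx; rewrite !(next_inj _ _ E) eqxx.
exists (nat_colouring (expn_gt0 2 n) g) => k S _; exists h; split => //.
apply: rainbow_nat_colouring; rewrite (eq_map gE).
  by rewrite map_inj_in_uniq // => x y xh _; apply: index_inj.
by apply/allP=> _ /mapP [x xh ->]; rewrite -size_h index_mem.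
Qed.

(** * Lower bounds *)

Definition hamming u v := #|[set j | u j != v j]|.

Lemma hamming_refl u : hamming u u = 0.
Proof. by apply/eqP; rewrite cards_eq0; apply/eqP/setP=> j; rewrite !inE eqxx. Qed.

Lemma hamming_sym u v : hamming u v = hamming v u.
Proof. by apply: eq_card => j; rewrite !inE eq_sym. Qed.

Lemma hamming_triangle u v w : hamming u w <= hamming u v + hamming v w.
Proof.
apply: leq_trans (leq_card_setU _ _); apply/subset_leq_card/subsetP=> j.
by rewrite !inE; case: (u j); case: (v j); case: (w j).
Qed.

Lemma path_hamming x p : path (@qadj n) x p -> hamming x (last x p) <= size p.
Proof.
elim: p x => [|y p IHp] x /=.
  by rewrite hamming_refl.
case/andP=> xy /IHp yp; apply: leq_trans (hamming_triangle x y _) _.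
by rewrite (eqP xy : hamming x y = 1) add1n ltnS.
Qed.

Lemma cycle_hamming s x y :
  is_cycle s -> x \in s -> y \in s -> 2 * hamming x y <= size s.
Proof.
case/and3P=> _ Us cyc xs ys; have [-> | xy] := eqVneq x y.
  by rewrite hamming_refl.
case: (rot_to_arc Us xs ys xy) => i p1 p2 _ _ Es'.
have Es : rot i s = x :: p1 ++ y :: p2 := Es'.
move: cyc; rewrite -(rot_cycle i) Es.
rewrite /cycle -cat_rcons rcons_cat cat_path.
case/andP=> /path_hamming; rewrite last_rcons => dxy /path_hamming.
rewrite last_rcons hamming_sym => dyx.
rewrite !size_rcons in dxy dyx; rewrite -(size_rot i) Es /= size_cat /=; lia.
Qed.

Definition antipode x : cube n := [ffun j => ~~ x j].

Lemma hamming_antipode x : hamming x (antipode x) = n.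
Proof.
rewrite /hamming (_ : [set j | _] = setT) ?cardsT ?card_ord //.
by apply/setP=> j; rewrite !inE ffunE; case: (x j).
Qed.

Definition odd_vertices : {set cube n} := [set u | parity u].

Lemma is_cycle_size_odd s :
  is_cycle s -> size s = 2 * #|[set u in s] :&: odd_vertices|.
Proof.
case/and3P=> _ Us cyc; set S := [set u in s].
have next_inj := can_inj (prev_next Us).
have next_parity u : u \in s -> parity (next s u) = ~~ parity u.
  by move=> us; apply: qadj_parity (next_cycle cyc us).
have le1 : #|S :&: odd_vertices| <= #|S :\: odd_vertices|.
  rewrite -(card_imset _ next_inj); apply/subset_leq_card/subsetP=> v /imsetP [u].
  by rewrite !inE => /andP [us uo] ->; rewrite next_parity // uo mem_next.
have le2 : #|S :\: odd_vertices| <= #|S :&: odd_vertices|.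
  rewrite -(card_imset _ next_inj); apply/subset_leq_card/subsetP=> v /imsetP [u].
  by rewrite !inE => /andP [uo us] ->; rewrite next_parity // uo mem_next us.
have size_S : #|S| = size s by rewrite /S cardsE (card_uniqP Us).
have E : #|S :\: odd_vertices| = #|S :&: odd_vertices| by apply/eqP; rewrite eqn_leq le1 le2.
by rewrite -size_S -(cardsID odd_vertices S) E addnn mul2n.
Qed.

Lemma card_odd_vertices : 0 < n -> #|odd_vertices| = 2 ^ n.-1.
Proof.
move=> n_gt0; pose i0 : 'I_n := Ordinal n_gt0.
have flip_odd : (flip^~ i0) @: (~: odd_vertices) = odd_vertices.
  apply/setP=> u; rewrite (can_imset_pre _ (flipK i0)) !inE.
  by rewrite (qadj_parity (qadj_flip u i0)) negbK.
have E : #|odd_vertices| = #|~: odd_vertices|.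
  by rewrite -{1}flip_odd card_imset //; apply: can_inj (flipK i0).
have := cardsC odd_vertices; rewrite card_cube -E.
have -> : 2 ^ n = 2 * 2 ^ n.-1 by rewrite -expnS prednK.
lia.
Qed.

Lemma rainbow_cycle_through m (c : colouring n m) k (A : {set cube n}) :
  k_rainbow_connected k c -> #|A| <= k <= 2 ^ n ->
  exists s, [/\ is_cycle s, {subset A <= s} & size s <= m].
Proof.
rewrite -card_cube => ck /exists_superset_card [S AS Sk].
have [s [cs Ss rs]] := ck S Sk.
by exists s; split=> // [u /(subsetP AS) /Ss // | ]; apply: rainbow_size rs.
Qed.

Lemma crx1_lower m (c : colouring n m) : k_rainbow_connected 1 c -> 4 <= m.
Proof.
move=> ck; have [|s [cs _ sm]] := rainbow_cycle_through (A := set0) ck.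
  by rewrite cards0 expn_gt0.
have := is_cycle_size_odd cs; have /and3P [s_gt2 _ _] := cs; lia.
Qed.

Lemma crx23_lower m (c : colouring n m) k :
  1 < n -> 2 <= k <= 3 -> k_rainbow_connected k c -> 2 * n <= m.
Proof.
move=> n_gt1 k_range ck; pose x : cube n := [ffun=> false].
have x_antipode : x != antipode x.
  by apply/eqP=> /ffunP /(_ (Ordinal (ltnW n_gt1))); rewrite !ffunE.
have n4 : 2 ^ 2 <= 2 ^ n by rewrite leq_exp2l.
have [|s [cs xs sm]] := rainbow_cycle_through (A := [set x; antipode x]) ck.
  by rewrite cards2 x_antipode; lia.
have := cycle_hamming cs (xs _ (set21 _ _)) (xs _ (set22 _ _)).
by rewrite hamming_antipode; lia.
Qed.

Lemma crx_large_lower m (c : colouring n m) k :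
  0 < n -> 2 ^ n.-1 <= k <= 2 ^ n -> k_rainbow_connected k c -> 2 ^ n <= m.
Proof.
move=> n_gt0 k_range ck.
have [|s [cs odd_s sm]] := rainbow_cycle_through (A := odd_vertices) ck.
  by rewrite card_odd_vertices.
have odd_sub : odd_vertices \subset [set u in s].
  by apply/subsetP=> u /odd_s; rewrite inE.
have := is_cycle_size_odd cs; rewrite (setIidPr odd_sub) card_odd_vertices //.
by rewrite -expnS prednK // => <-.
Qed.

End Cube.

Theorem theorem3p6 (n : nat) (hn : 2 <= n) :
  [/\ is_crx n 1 4,
      is_crx n 2 (2 * n),
      is_crx n 3 (2 * n)
    & forall k : nat, 2 ^ n.-1 <= k <= 2 ^ n -> is_crx n k (2 ^ n)].
Proof.
have n_gt0 : 0 < n := ltnW hn.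
have four_gt0 : 0 < 2 * 2 by [].
have twice_n_gt0 : 0 < 2 * n by rewrite muln_gt0.
have cube_rainbow k : 0 < k <= 3 ->
    k_rainbow_connected k (nat_colouring twice_n_gt0 (@edge_colour n)).
  move=> k_range; apply: small_sets_rainbow_connected => // [|S _].
    by rewrite hn leqnn.
  by exists [ffun=> false] => y _; apply: subcube_top.
split; [split | split | split | move=> k k_range; split].
- exists (nat_colouring four_gt0 (@edge_colour n)).
  apply: (@small_sets_rainbow_connected n 2); rewrite ?hn // => S /eqP /cards1P [x ->].
  by exists x => y /set1P ->; apply: subcube_refl.
- exact: crx1_lower.
- by exists (nat_colouring twice_n_gt0 (@edge_colour n)); apply: cube_rainbow.
- by move=> m c; apply: crx23_lower.
- by exists (nat_colouring twice_n_gt0 (@edge_colour n)); apply: cube_rainbow.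
- by move=> m c; apply: crx23_lower.
- by have [c ck] := hamiltonian_rainbow_colouring hn; exists c.
- by move=> m c; apply: crx_large_lower.
Qed.
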